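(* Consider a twice continuously differentiable function $f(X_1,\dots,X_k)$ with $X_i\in\operatorname{Gr}(n_i,r_i)$, $i=1,\dots,k$, to be minimized. Let $X_i(t)$ be the geodesics defined by tangents $\Delta_i\in\mathbf{T}_{X_i}$, with corresponding parallel transported tangent space basis matrices $Y_i(t)=T_{X_i,\Delta_i}(t)Y_i$, where $[X_i\;Y_i]$ is orthogonal. When tangents and operators are expressed in local coordinates in these bases, the BFGS update of the Hessian approximation on the product of Grassmannians, \[ \mathcal{H}_{+}=\mathcal{H}-\frac{\langle\mathcal{H},S\rangle\otimes\langle\mathcal{H},S\rangle}{\langle\langle\mathcal{H},S\rangle,S\rangle}+\frac{Y\otimes Y}{\langle S,Y\rangle}, \] has the same optimality properties as the BFGS update for a function with variables in a Euclidean space, i.e. it is the least change update of the current Hessian approximation that satisfies the secant equation.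
   Context: Points of $\operatorname{Gr}(n,r)$ are $n\times r$ matrices with orthonormal columns; $\mathbf{T}_X=\{\Delta: X^{\mathsf{T}}\Delta=0\}$ with inner product $\operatorname{tr}(\Delta_1^{\mathsf{T}}\Delta_2)$; in the basis $Y$ (with $[X\;Y]$ orthogonal) a tangent $\Delta=YD$ has local coordinates $D=Y^{\mathsf{T}}\Delta$. For thin SVD $\Delta=U\Sigma V^{\mathsf{T}}$ the geodesic is $X(t)=[XV\;U]\begin{bmatrix}\cos\Sigma t\\ \sin\Sigma t\end{bmatrix}V^{\mathsf{T}}$ and the transport matrix is $T_{X,\Delta}(t)=[XV\;U]\begin{bmatrix}-\sin\Sigma t\\ \cos\Sigma t\end{bmatrix}U^{\mathsf{T}}+(I-UU^{\mathsf{T}})$. The Grassmann gradient of $f$ in the $i$th variable is $\Pi_{X_i}\partial f/\partial X_i$ with $\Pi_{X_i}=I-X_iX_i^{\mathsf{T}}$. In a quasi-Newton step from $(X_1,\dots,X_k)$ with search direction $(\Delta_1,\dots,\Delta_k)$ and step length $t_k$, one sets $S=(S_1,\dots,S_k)$, $S_i=t_kT_{X_i,\Delta_i}(t_k)\Delta_i$, and $Y=(Y^{(1)},\dots,Y^{(k)})$ with $Y^{(i)}$ the gradient component at the new point minus the transported ($T_{X_i,\Delta_i}(t_k)$) gradient component at the old point; in local coordinates these are expressed in the bases $Y_i(t_k)$. The Hessian approximation $\mathcal{H}$ is a linear operator on $\mathbf{T}_{X_1}\times\dots\times\mathbf{T}_{X_k}$ (block form with blocks $\mathcal{H}_{ij}:\mathbf{T}_{X_j}\to\mathbf{T}_{X_i}$);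 $\langle\mathcal{H},S\rangle$ denotes its action on $S$, $\langle S,Y\rangle=\sum_i\langle S_i,Y^{(i)}\rangle$, and $\Delta\otimes\Gamma$ for tuples is the block operator with blocks $\Delta_i\otimes\Gamma_j$ (i.e. $\Gamma\mapsto$ the rank-one operator $Z\mapsto\langle\Gamma,Z\rangle\Delta$ blockwise). Euclidean BFGS optimality (as meant here): for $s\neq 0$, $y$ with $y^{\mathsf{T}}s>0$ and $H=LL^{\mathsf{T}}$ ($L$ invertible), the BFGS update $H_+=H-\frac{Hss^{\mathsf{T}}H}{s^{\mathsf{T}}Hs}+\frac{yy^{\mathsf{T}}}{y^{\mathsf{T}}s}$ satisfies $H_+s=y$, is symmetric positive definite, and equals $L_+L_+^{\mathsf{T}}$ where $L_+$ is the Frobenius-nearest matrix to $L$ mapping $v$ to $y$, with $v=\alpha L^{\mathsf{T}}s$, $\alpha^2=y^{\mathsf{T}}s/s^{\mathsf{T}}Hs$. *)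

From HB Require Import structures.
From mathcomp Require Import all_boot all_order all_algebra.
From mathcomp Require Import all_classical all_reals all_analysis.
Set Implicit Arguments.
Unset Strict Implicit.
Unset Printing Implicit Defensive.
Import Order.TTheory GRing.Theory Num.Theory.
Local Open Scope ring_scope.

Section Grassmann.
Variable R : realType.

Definition cosm (m : nat) (sigma : 'rV[R]_m) (t : R) : 'M[R]_m :=
  diag_mx (\row_j cos (sigma 0 j * t)).
Definition sinm (m : nat) (sigma : 'rV[R]_m) (t : R) : 'M[R]_m :=
  diag_mx (\row_j sin (sigma 0 j * t)).

Definition thin_svd (n r : nat) (Delta U : 'M[R]_(n, r)) (sigma : 'rV[R]_r)
    (V : 'M[R]_r) : Prop :=
  [/\ Delta = U *m diag_mx sigma *m V^T, U^T *m U = 1%:M,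
      V^T *m V = 1%:M & forall j, 0 <= sigma 0 j].

(* [X Y] is an orthogonal (square) matrix *)
Definition orth_compl (n r : nat) (X : 'M[R]_(n, r)) (Y : 'M[R]_(n, n - r))
  : Prop :=
  [/\ X^T *m X = 1%:M, Y^T *m Y = 1%:M, X^T *m Y = 0
    & X *m X^T + Y *m Y^T = 1%:M].

Definition geod (n r : nat) (X U : 'M[R]_(n, r)) (sigma : 'rV[R]_r)
    (V : 'M[R]_r) (t : R) : 'M[R]_(n, r) :=
  row_mx (X *m V) U *m col_mx (cosm sigma t) (sinm sigma t) *m V^T.

Definition transp (n r : nat) (X U : 'M[R]_(n, r)) (sigma : 'rV[R]_r)
    (V : 'M[R]_r) (t : R) : 'M[R]_n :=
  row_mx (X *m V) U *m col_mx (- sinm sigma t) (cosm sigma t) *m U^T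
  + (1%:M - U *m U^T).

Variables (k : nat) (n r : 'I_k -> nat).

Definition fam := forall i : 'I_k, 'M[R]_(n i, r i).

Definition ipf (A B : fam) : R := \sum_(i < k) \tr ((A i)^T *m B i).

(* dimension of the local-coordinate space *)
Definition Ndim : nat := (\sum_(i < k) ((n i - r i) * r i))%N.

(* local coordinates of a tuple of tangents in the bases Yb_i, stacked *)
Definition coordvec (Yb : forall i, 'M[R]_(n i, n i - r i)) (Z : fam)
  : 'cV[R]_Ndim :=
  mxcol (p_ := fun i => ((n i - r i) * r i)%N)
    (fun i => (mxvec ((Yb i)^T *m Z i))^T).

Definition locdecode (Yb : forall i, 'M[R]_(n i, n i - r i)) (c : 'cV[R]_Ndim)
  : fam :=
  fun i => Yb i *m vec_mx (submxcol (p_ := fun i => ((n i - r i) * r i)%N) c i)^T.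

End Grassmann.

Section Euclid.
Variable R : realType.
Variable N : nat.

Definition bfgs_mx (H : 'M[R]_N) (s y : 'cV[R]_N) : 'M[R]_N :=
  H - ((s^T *m H *m s) 0 0)^-1 *: (H *m s *m (H *m s)^T)
    + ((y^T *m s) 0 0)^-1 *: (y *m y^T).

Definition frob_nearest (L : 'M[R]_N) (v y : 'cV[R]_N) (Lp : 'M[R]_N) : Prop :=
  Lp *m v = y /\
  forall M : 'M[R]_N, M *m v = y ->
    \tr ((Lp - L)^T *m (Lp - L)) <= \tr ((M - L)^T *m (M - L)).

(* the optimality properties of the Euclidean BFGS update, for H = L L^T *)
Definition bfgs_optimal (H L : 'M[R]_N) (s y : 'cV[R]_N) (Hp : 'M[R]_N) : Prop :=
  [/\ Hp *m s = y,
      Hp^T = Hp,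
      (forall x : 'cV[R]_N, x != 0 -> 0 < (x^T *m Hp *m x) 0 0) &
      forall alpha : R,
        alpha ^+ 2 = (y^T *m s) 0 0 / (s^T *m H *m s) 0 0 ->
        (exists Lp, frob_nearest L (alpha *: (L^T *m s)) y Lp) /\
        (forall Lp, frob_nearest L (alpha *: (L^T *m s)) y Lp ->
           Hp = Lp *m Lp^T)].
End Euclid.

(* Transport is orthogonal and maps the tangent space at [X_i] into the one at
   [X_i(t)], so [(X_i(t), Y_i(t))] is again an orthonormal frame.  The stacked
   local coordinates in the bases [Y_i(t)] are then an isometry from the product
   of tangent spaces onto Euclidean space, and read in these coordinates the
   Grassmann update is exactly the matrix BFGS update of [H] with [s], [y] the
   coordinates of [S], [Y].  Everything is thus reduced to Euclidean BFGS, whose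
   least-change property comes from the fact that the Frobenius-nearest matrix
   to [L] sending [v] to [y] is the rank-one correction
   [L + (y - L v) v^T / v^T v]; the choice of [alpha] collapses its Gram matrix
   to the BFGS formula. *)

From HB Require Import structures.
From mathcomp Require Import all_boot all_order all_algebra.
From mathcomp Require Import all_classical all_reals all_analysis.
From mathcomp Require Import ring lra.
Import Order.TTheory GRing.Theory Num.Theory.
Local Open Scope ring_scope.

Set Implicit Arguments.
Unset Strict Implicit.
Unset Printing Implicit Defensive.

Section EuclideanBFGS.
Variable R : realType.

Definition dot N (u v : 'cV[R]_N) : R := (u^T *m v) 0 0.

Lemma dotE N (u v : 'cV[R]_N) : dot u v = \sum_i u i 0 * v i 0.
Proof. by rewrite /dot mxE; apply: eq_bigr => i _; rewrite mxE. Qed.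

Lemma dotC N (u v : 'cV[R]_N) : dot u v = dot v u.
Proof. by rewrite !dotE; apply: eq_bigr => i _; rewrite mulrC. Qed.

Lemma dotBl N (u w v : 'cV[R]_N) : dot (u - w) v = dot u v - dot w v.
Proof. by rewrite !dotE -sumrB; apply: eq_bigr => i _; rewrite !mxE mulrBl. Qed.

Lemma dotZl N a (u v : 'cV[R]_N) : dot (a *: u) v = a * dot u v.
Proof. by rewrite !dotE mulr_sumr; apply: eq_bigr => i _; rewrite mxE mulrA. Qed.

Lemma dotBr N (u w v : 'cV[R]_N) : dot v (u - w) = dot v u - dot v w.
Proof. by rewrite dotC dotBl !(dotC v). Qed.

Lemma dotDr N (u w v : 'cV[R]_N) : dot v (u + w) = dot v u + dot v w.
Proof. by rewrite !dotE -big_split; apply: eq_bigr => i _; rewrite mxE mulrDr. Qed.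

Lemma dotZr N a (u v : 'cV[R]_N) : dot v (a *: u) = a * dot v u.
Proof. by rewrite dotC dotZl dotC. Qed.

Lemma dotMl N (A : 'M[R]_N) (u v : 'cV[R]_N) : dot (A *m u) v = dot u (A^T *m v).
Proof. by rewrite /dot trmx_mul mulmxA. Qed.

Lemma dot_ge0 N (u : 'cV[R]_N) : 0 <= dot u u.
Proof. by rewrite dotE; apply: sumr_ge0 => i _; rewrite -expr2 sqr_ge0. Qed.

Lemma dot_eq0 N (u : 'cV[R]_N) : (dot u u == 0) = (u == 0).
Proof.
apply/idP/eqP => [|->]; last by rewrite /dot mulmx0 mxE.
rewrite dotE psumr_eq0 => [/allP u0|i _]; last by rewrite -expr2 sqr_ge0.
apply/matrixP => i j; rewrite (ord1 j) mxE.
by have /implyP/(_ isT) := u0 i (mem_index_enum i); rewrite mulf_eq0 orbb => /eqP.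
Qed.

Lemma mulmx_dot m N (u : 'M[R]_(m, 1)) (v x : 'cV[R]_N) :
  u *m (v^T *m x) = dot v x *: u.
Proof. by rewrite [v^T *m x]mx11_scalar mul_mx_scalar. Qed.

Lemma mxtrace_mulTmx m p (M E : 'M[R]_(m, p)) :
  \tr (M^T *m E) = dot (mxvec M)^T (mxvec E)^T.
Proof.
rewrite /dot trmxK mxE (reindex _ (curry_mxvec_bij _ _)) /=.
rewrite /mxtrace; under [LHS]eq_bigr do rewrite mxE.
rewrite exchange_big pair_big /=; apply: eq_bigr => -[i j] _ /=.
by rewrite !mxE !mxvecE.
Qed.

Definition frob2 m p (E : 'M[R]_(m, p)) : R := \tr (E^T *m E).

Lemma frob2_ge0 m p (E : 'M[R]_(m, p)) : 0 <= frob2 E.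
Proof. by rewrite /frob2 mxtrace_mulTmx dot_ge0. Qed.

Lemma frob2_eq0 m p (E : 'M[R]_(m, p)) : frob2 E = 0 -> E = 0.
Proof.
by rewrite /frob2 mxtrace_mulTmx => /eqP; rewrite dot_eq0 trmx_eq0 mxvec_eq0 => /eqP.
Qed.

Lemma frob2D m p (A E : 'M[R]_(m, p)) :
  frob2 (A + E) = frob2 A + 2 * \tr (A^T *m E) + frob2 E.
Proof.
rewrite /frob2 [(A + E)^T]linearD /= mulmxDl !mulmxDr !mxtraceD.
have -> : \tr (E^T *m A) = \tr (A^T *m E) by rewrite -mxtrace_tr trmx_mul trmxK.
by rewrite mulr2n mulrDl mul1r !addrA.
Qed.

Lemma frob_nearestP N (L Lp : 'M[R]_N) (v y : 'cV[R]_N) : v != 0 ->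
  frob_nearest L v y Lp <-> Lp = L + (dot v v)^-1 *: ((y - L *m v) *m v^T).
Proof.
rewrite -dot_eq0 => vv0; set Lp0 := L + _.
have Lp0v : Lp0 *m v = y.
  rewrite mulmxDl -scalemxAl -mulmxA mulmx_dot scalerA mulVf // scale1r.
  by rewrite addrC subrK.
(* [Lp0 - L] is a multiple of [_ *m v^T], hence Frobenius-orthogonal to any
   [M - Lp0] that kills [v]. *)
have pythagoras M : M *m v = y -> frob2 (M - L) = frob2 (Lp0 - L) + frob2 (M - Lp0).
  move=> Mv; have -> : M - L = (Lp0 - L) + (M - Lp0) by rewrite [RHS]addrC addrA subrK.
  rewrite frob2D.
  suff -> : \tr ((Lp0 - L)^T *m (M - Lp0)) = 0 by rewrite mulr0 addr0.
  rewrite addrC addKr linearZ /= -scalemxAl mxtraceZ trmx_mul trmxK -mulmxA.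
  by rewrite mxtrace_mulC -mulmxA mulmxBl Mv Lp0v subrr mulmx0 linear0 mulr0.
split => [[Lpv Lpmin] | ->].
  have : frob2 (Lp - L) <= frob2 (Lp0 - L) := Lpmin Lp0 Lp0v.
  rewrite (pythagoras Lp Lpv) -lerBrDl subrr => le0.
  apply/eqP; rewrite -subr_eq0; apply/eqP/frob2_eq0.
  by apply/eqP; rewrite eq_le le0 frob2_ge0.
split => // M Mv; rewrite -[leRHS]/(frob2 _) (pythagoras M Mv) lerDl; exact: frob2_ge0.
Qed.

Lemma bfgs_mx_mul N (H : 'M[R]_N) s y x :
  bfgs_mx H s y *m x =
  H *m x - (dot (H *m s) x / dot s (H *m s)) *: (H *m s) + (dot y x / dot y s) *: y.
Proof.
rewrite /bfgs_mx !mulmxDl mulNmx -!scalemxAl -!mulmxA !mulmx_dot !scalerA.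
by rewrite scalemxAr scalerA -scalemxAr ![_^-1 * _]mulrC.
Qed.

Lemma bfgs_mx_tr N (H : 'M[R]_N) s y :
  H^T = H -> (bfgs_mx H s y)^T = bfgs_mx H s y.
Proof.
move=> Hsym; rewrite /bfgs_mx !raddfD /= !raddfN /= !linearZ /=.
by rewrite !trmx_mul !trmxK Hsym.
Qed.

Lemma bfgs_mx_secant N (H : 'M[R]_N) s y :
  dot (H *m s) s != 0 -> dot y s != 0 -> bfgs_mx H s y *m s = y.
Proof.
by move=> sHs ys; rewrite bfgs_mx_mul (dotC s) !divff // !scale1r subrr add0r.
Qed.

Lemma mulmx_tr_rank_one_update N (L : 'M[R]_N) (v w : 'cV[R]_N) c :
  (L + c *: (w *m v^T)) *m (L + c *: (w *m v^T))^T =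
  L *m L^T + c *: (L *m v *m w^T) + c *: (w *m (L *m v)^T)
    + (c ^+ 2 * dot v v) *: (w *m w^T).
Proof.
rewrite raddfD /= linearZ /= trmx_mul trmxK mulmxDl !mulmxDr.
have -> : L *m (c *: (v *m w^T)) = c *: (L *m v *m w^T) by rewrite -scalemxAr mulmxA.
have -> : c *: (w *m v^T) *m L^T = c *: (w *m (L *m v)^T).
  by rewrite -scalemxAl trmx_mul mulmxA.
rewrite -scalemxAl -scalemxAr !mulmxA -(mulmxA w) mulmx_dot -scalemxAl !scalerA.
by rewrite expr2 mulrA !addrA.
Qed.

Section FactoredBFGS.
Variables (N : nat) (L : 'M[R]_N) (s y : 'cV[R]_N).
Let u := L^T *m s.

Lemma dot_mulmx_tr x z : dot (L *m L^T *m x) z = dot (L^T *m x) (L^T *m z).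
Proof. by rewrite -mulmxA dotMl. Qed.

Lemma quad_mulmx_tr : (s^T *m (L *m L^T) *m s) 0 0 = dot u u.
Proof. by rewrite -mulmxA -/(dot s _) dotC dot_mulmx_tr. Qed.

Lemma bfgs_mx_quad x : dot u u != 0 -> dot y s != 0 ->
  let v := L^T *m x in let w := v - (dot v u / dot u u) *: u in
  (x^T *m bfgs_mx (L *m L^T) s y *m x) 0 0 = dot w w + dot y x ^+ 2 / dot y s.
Proof.
move=> uu ys v w; rewrite -mulmxA -/(dot x _) bfgs_mx_mul (dotC s).
rewrite dotDr dotBr !dotZr -[dot x (_ *m x)]dotC -[dot x (_ *m s)]dotC.
rewrite !dot_mulmx_tr -/u -/v /w dotBl !dotBr !dotZl !dotZr (dotC u v) (dotC x y).
by field; rewrite ys uu.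
Qed.

Hypotheses (Lunit : L \in unitmx) (ys_gt0 : 0 < dot y s).
Let LTunit : L^T \in unitmx. Proof. by rewrite unitmx_tr. Qed.

Lemma dot_mulmx_tr_gt0 : 0 < dot u u.
Proof.
have s0 : s != 0 by apply: contraTneq ys_gt0 => ->; rewrite /dot mulmx0 mxE ltxx.
rewrite lt_def dot_ge0 andbT dot_eq0; apply: contra s0 => /eqP u0.
by rewrite -(mulKmx LTunit s) -/u u0 mulmx0.
Qed.

Lemma bfgs_mx_posdef (x : 'cV[R]_N) :
  x != 0 -> 0 < (x^T *m bfgs_mx (L *m L^T) s y *m x) 0 0.
Proof.
have uu := dot_mulmx_tr_gt0.
move=> x0; rewrite bfgs_mx_quad ?gt_eqF //.
set v := L^T *m x; set lam := dot v u / dot u u; set w := v - lam *: u.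
have yx2_ge0 : 0 <= dot y x ^+ 2 / dot y s by rewrite divr_ge0 ?sqr_ge0 ?ltW.
rewrite lt_def (addr_ge0 (dot_ge0 w) yx2_ge0) andbT paddr_eq0 ?dot_ge0 //.
apply: contra x0 => /andP[]; rewrite dot_eq0 subr_eq0 => /eqP vE.
have -> : x = lam *: s by rewrite -(mulKmx LTunit x) -/v vE -scalemxAr mulKmx.
rewrite dotZr mulf_eq0 invr_eq0 (gt_eqF ys_gt0) orbF expf_eq0 /= mulf_eq0 (gt_eqF ys_gt0).
by rewrite orbF => /eqP ->; rewrite scale0r.
Qed.

Lemma dot_scaled_mulmx_tr alpha : alpha ^+ 2 = dot y s / dot u u ->
  dot (alpha *: u) (alpha *: u) = dot y s.
Proof.
move=> alpha2; rewrite dotZl dotZr mulrA -expr2 alpha2 mulfVK //.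
by rewrite gt_eqF ?dot_mulmx_tr_gt0.
Qed.

Lemma bfgs_mx_factor alpha : alpha ^+ 2 = dot y s / dot u u ->
  let v := alpha *: u in
  let Lp := L + (dot v v)^-1 *: ((y - L *m v) *m v^T) in
  Lp *m Lp^T = bfgs_mx (L *m L^T) s y.
Proof.
move=> alpha2 v Lp; rewrite /Lp mulmx_tr_rank_one_update.
have Lv : L *m v = alpha *: (L *m L^T *m s) by rewrite /v -scalemxAr mulmxA.
rewrite Lv dot_scaled_mulmx_tr // /bfgs_mx quad_mulmx_tr -/(dot y s).
have ys0 : dot y s != 0 by rewrite gt_eqF.
have a0 : alpha != 0.
  have : alpha ^+ 2 != 0 by rewrite alpha2 mulf_neq0 ?invr_eq0 ?gt_eqF ?dot_mulmx_tr_gt0.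
  by rewrite expf_eq0.
have -> : dot u u = dot y s / alpha ^+ 2.
  by rewrite alpha2 invf_div mulrCA mulfV ?mulr1.
apply/matrixP => i j; rewrite !(mxE, big_ord1).
by field; rewrite ys0 a0.
Qed.

Lemma bfgs_mx_optimal : bfgs_optimal (L *m L^T) L s y (bfgs_mx (L *m L^T) s y).
Proof.
have uu := dot_mulmx_tr_gt0; have ys0 : dot y s != 0 by rewrite gt_eqF.
split.
- by apply: bfgs_mx_secant; rewrite // dot_mulmx_tr gt_eqF.
- by apply: bfgs_mx_tr; rewrite trmx_mul trmxK.
- exact: bfgs_mx_posdef.
move=> alpha; rewrite quad_mulmx_tr -/(dot y s) -/u => alpha2.
have v0 : alpha *: u != 0 by rewrite -dot_eq0 dot_scaled_mulmx_tr.
split; first by eexists; apply/(frob_nearestP _ _ _ v0).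
by move=> Lp /(frob_nearestP _ _ _ v0) ->; rewrite bfgs_mx_factor.
Qed.
End FactoredBFGS.
End EuclideanBFGS.

Lemma mulmx_middle (R : pzRingType) a b c d e (M1 : 'M[R]_(a, b))
    (M2 : 'M[R]_(b, c)) (M3 : 'M[R]_(c, d)) (M4 : 'M[R]_(d, e)) :
  M1 *m M2 *m (M3 *m M4) = M1 *m (M2 *m M3) *m M4.
Proof. by rewrite !mulmxA. Qed.

Lemma mulmx_tr_proj_compl (R : pzRingType) m p q (X : 'M[R]_(m, p))
    (M : 'M[R]_(m, q)) :
  X^T *m X = 1%:M -> X^T *m ((1%:M - X *m X^T) *m M) = 0.
Proof. by move=> XX; rewrite mulmxA mulmxBr mulmx1 mulmxA XX mul1mx subrr mul0mx. Qed.

Lemma orthonormal_le (R : fieldType) m p (X : 'M[R]_(m, p)) :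
  X^T *m X = 1%:M -> (p <= m)%N.
Proof.
move=> XX; rewrite -[p](mxrank1 R) -XX.
exact: leq_trans (mxrankM_maxl _ _) (rank_leq_col _).
Qed.

Lemma orthonormal_blocks_complete (R : fieldType) m p q (epq : (p + q)%N = m)
    (X : 'M[R]_(m, p)) (Y : 'M[R]_(m, q)) :
  X^T *m X = 1%:M -> Y^T *m Y = 1%:M -> X^T *m Y = 0 -> X *m X^T + Y *m Y^T = 1%:M.
Proof.
case: m / epq X Y => X Y XX YY XY.
have YX : Y^T *m X = 0 by rewrite -[Y^T *m X]trmxK trmx_mul trmxK XY trmx0.
have : (row_mx X Y)^T *m row_mx X Y = 1%:M.
  by rewrite tr_row_mx mul_col_row XX YY XY YX -scalar_mx_block.
by move/mulmx1C; rewrite tr_row_mx mul_row_col.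
Qed.

Lemma orth_complP (R : realType) n r (X : 'M[R]_(n, r)) (Y : 'M[R]_(n, n - r)) :
  X^T *m X = 1%:M -> Y^T *m Y = 1%:M -> X^T *m Y = 0 -> orth_compl X Y.
Proof.
move=> XX YY XY; split => //.
exact: orthonormal_blocks_complete (subnKC (orthonormal_le XX)) _ _ XX YY XY.
Qed.

Section Trigonometric.
Variables (R : realType) (m : nat) (sg : 'rV[R]_m) (t : R).

Lemma tr_cosm : (cosm sg t)^T = cosm sg t. Proof. exact: tr_diag_mx. Qed.
Lemma tr_sinm : (sinm sg t)^T = sinm sg t. Proof. exact: tr_diag_mx. Qed.

Lemma diag_mul_entry (a b : 'rV[R]_m) i j :
  (diag_mx a *m diag_mx b) i j = a 0 i * b 0 i *+ (i == j).
Proof. by rewrite mul_diag_mx !mxE mulrnAr. Qed.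

Lemma cosm_sinmC : cosm sg t *m sinm sg t = sinm sg t *m cosm sg t.
Proof. by apply/matrixP => i j; rewrite !diag_mul_entry mulrC. Qed.

Lemma cosm2_sinm2 : cosm sg t *m cosm sg t + sinm sg t *m sinm sg t = 1%:M.
Proof.
by apply/matrixP => i j; rewrite mxE !diag_mul_entry !mxE -mulrnDl -!expr2 cos2Dsin2.
Qed.

Lemma mulmx_diag0_sinm_cosm p (A : 'M[R]_(p, m)) : A *m diag_mx sg = 0 ->
  A *m sinm sg t = 0 /\ A *m cosm sg t = A.
Proof.
move=> /matrixP A0.
have A0' i j : A i j = 0 \/ sg 0 j = 0.
  move: (A0 i j); rewrite mul_mx_diag !mxE => /eqP.
  by rewrite mulf_eq0 => /orP[]/eqP; [left | right].
split; apply/matrixP => i j; rewrite mul_mx_diag !mxE;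
  by case: (A0' i j) => ->; rewrite ?mul0r ?sin0 ?cos0 ?mulr0 ?mulr1.
Qed.
End Trigonometric.

Section GeodesicFrame.
Variables (R : realType) (n r : nat) (X D U : 'M[R]_(n, r)).
Variables (sigma : 'rV[R]_r) (V : 'M[R]_r) (t : R).
Hypotheses (XX : X^T *m X = 1%:M) (hD : X^T *m D = 0) (hsvd : thin_svd D U sigma V).
Variable Yb : 'M[R]_(n, n - r).
Hypotheses (YY : Yb^T *m Yb = 1%:M) (XY : X^T *m Yb = 0).

Local Notation C := (cosm sigma t).
Local Notation S := (sinm sigma t).

Let W := X *m V.
Let A := X^T *m U.
Let E := C - 1%:M.

(* Expanding the block products gives [X(t) = Q V^T] and [T(t) = 1 + K U^T]. *)
Local Notation Q := (W *m C + U *m S).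
Local Notation K := (W *m - S + U *m E).

Let UU : U^T *m U = 1%:M. Proof. by case: hsvd. Qed.
Let VV : V^T *m V = 1%:M. Proof. by case: hsvd. Qed.

(* [U] need not be orthogonal to [X]: [X^T D = 0] only forces this for the
   columns of [U] with nonzero singular value; the others are rotated by the
   angle [0 * t]. *)
Let A_sigma : A *m diag_mx sigma = 0.
Proof.
case: hsvd => DE _ _ _; have := congr1 (mulmx^~ V) hD.
by rewrite DE !mulmxA -(mulmxA _ V^T V) VV mulmx1 mul0mx.
Qed.

Let AS : A *m S = 0. Proof. by case: (mulmx_diag0_sinm_cosm t A_sigma). Qed.

Let AC : A *m C = A. Proof. by case: (mulmx_diag0_sinm_cosm t A_sigma). Qed.

Let AE : A *m E = 0. Proof. by rewrite /E mulmxBr AC mulmx1 subrr. Qed.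

Let SAT : S *m A^T = 0. Proof. by rewrite -[S]tr_sinm -trmx_mul AS trmx0. Qed.

Let EAT : E *m A^T = 0.
Proof. by rewrite -[E]trmxK /E raddfB /= tr_cosm trmx1 -trmx_mul AE trmx0. Qed.

Let WW : W^T *m W = 1%:M. Proof. by rewrite trmx_mul mulmx_middle XX mulmx1. Qed.

Let WU : W^T *m U = V^T *m A. Proof. by rewrite trmx_mul -mulmxA. Qed.

Let UW : U^T *m W = A^T *m V. Proof. by rewrite trmx_mul trmxK mulmxA. Qed.

Let geodE : geod X U sigma V t = Q *m V^T.
Proof. by rewrite /geod mul_row_col. Qed.

Let transpE : transp X U sigma V t = 1%:M + K *m U^T.
Proof.
rewrite /transp mul_row_col /E !mulmxDl !mulmxBr !mulmxBl !mulmx1.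
by apply/matrixP => i j; rewrite !mxE; ring.
Qed.

Let QT : Q^T = C *m W^T + S *m U^T.
Proof. by rewrite raddfD /= !trmx_mul tr_cosm tr_sinm. Qed.

Let KT : K^T = - S *m W^T + E *m U^T.
Proof. by rewrite raddfD /= !trmx_mul raddfN /= /E raddfB /= tr_sinm tr_cosm trmx1. Qed.

Let QW : Q^T *m W = C.
Proof. by rewrite QT mulmxDl -!mulmxA WW UW (mulmxA S) SAT mul0mx addr0 mulmx1. Qed.

Let QU : Q^T *m U = C *m (V^T *m A) + S.
Proof. by rewrite QT mulmxDl -!mulmxA WU UU mulmx1. Qed.

Let KW : K^T *m W = - S.
Proof. by rewrite KT mulmxDl -!mulmxA WW UW (mulmxA E) EAT mul0mx addr0 mulmx1. Qed.

Let KU : K^T *m U = - S *m (V^T *m A) + E.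
Proof. by rewrite KT mulmxDl -!mulmxA WU UU mulmx1. Qed.

Let QQ : Q^T *m Q = 1%:M.
Proof.
rewrite mulmxDr (mulmxA _ W) (mulmxA _ U) QW QU mulmxDl -(mulmxA C) -(mulmxA V^T) AS.
by rewrite !mulmx0 add0r cosm2_sinm2.
Qed.

Let QK : Q^T *m K = - S.
Proof.
rewrite mulmxDr (mulmxA _ W) (mulmxA _ U) QW QU mulmxDl -(mulmxA C) -(mulmxA V^T) AE.
rewrite !mulmx0 add0r /E mulmxBr mulmx1 mulmxN cosm_sinmC.
by rewrite addrA addNr add0r.
Qed.

Let KK : K^T *m K = - (E + E).
Proof.
rewrite mulmxDr (mulmxA _ W) (mulmxA _ U) KW KU mulmxDl.
rewrite -(mulmxA (- S)) -(mulmxA V^T) AE !mulmx0 add0r mulNmx mulmxN opprK.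
have SS : S *m S = 1%:M - C *m C by rewrite -(cosm2_sinm2 sigma t) addrC addKr.
rewrite SS /E mulmxBl !mulmxBr !mulmx1 mul1mx.
by apply/matrixP => i j; rewrite !mxE; ring.
Qed.

Let KY : K^T *m Yb = E *m (U^T *m Yb).
Proof.
have WY : W^T *m Yb = 0 by rewrite trmx_mul -mulmxA XY mulmx0.
by rewrite KT mulmxDl -!mulmxA WY mulmx0 add0r.
Qed.

Lemma geod_orthonormal : (geod X U sigma V t)^T *m geod X U sigma V t = 1%:M.
Proof.
have VVt : V *m V^T = 1%:M by apply: mulmx1C.
by rewrite geodE trmx_mul trmxK mulmx_middle QQ mulmx1 VVt.
Qed.

Lemma transp_tangent p (Z : 'M[R]_(n, p)) : X^T *m Z = 0 ->
  (geod X U sigma V t)^T *m (transp X U sigma V t *m Z) = 0.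
Proof.
move=> XZ; have WZ : W^T *m Z = 0 by rewrite trmx_mul -mulmxA XZ mulmx0.
have QZ : Q^T *m Z = S *m (U^T *m Z).
  by rewrite QT mulmxDl -!mulmxA WZ mulmx0 add0r.
rewrite geodE trmx_mul trmxK transpE mulmxDl mul1mx -(mulmxA V) mulmxDr QZ.
by rewrite -(mulmxA K) (mulmxA Q^T K) QK mulNmx subrr mulmx0.
Qed.

(* Writing [T Yb = Yb + K B] with [B = U^T Yb], the cross terms [2 B^T E B]
   cancel against [B^T K^T K B = - 2 B^T E B]. *)
Let transp_basis_orthonormal :
  (transp X U sigma V t *m Yb)^T *m (transp X U sigma V t *m Yb) = 1%:M.
Proof.
have ET : E^T = E by rewrite /E raddfB /= tr_cosm trmx1.
have -> : transp X U sigma V t *m Yb = Yb + K *m (U^T *m Yb).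
  by rewrite transpE mulmxDl mul1mx -mulmxA.
move: (U^T *m Yb) (KY) => B KYB.
have YKB : Yb^T *m (K *m B) = B^T *m E *m B.
  by rewrite mulmxA -[Yb^T *m K]trmxK trmx_mul trmxK KYB trmx_mul ET.
have BKY : B^T *m K^T *m Yb = B^T *m E *m B by rewrite -mulmxA KYB mulmxA.
have BKKB : B^T *m K^T *m (K *m B) = - (B^T *m E *m B *+ 2).
  by rewrite mulmx_middle KK mulmxN mulNmx mulr2n mulmxDr mulmxDl.
rewrite [(Yb + _)^T]raddfD /= trmx_mul (mulmxDl Yb^T) !(mulmxDr _ Yb).
by rewrite YY YKB BKY BKKB addrA -(addrA 1%:M) -mulr2n addrK.
Qed.

Lemma geod_orth_compl :
  orth_compl (geod X U sigma V t) (transp X U sigma V t *m Yb).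
Proof.
apply: orth_complP; [exact: geod_orthonormal | exact: transp_basis_orthonormal |].
exact: transp_tangent.
Qed.
End GeodesicFrame.

Section Coordinates.
Variables (R : realType) (k : nat) (n r : 'I_k -> nat).
Variables (Xf : @fam R k n r) (Yf : forall i, 'M[R]_(n i, n i - r i)).
Hypothesis hF : forall i, orth_compl (Xf i) (Yf i).

Definition tangent (Z : @fam R k n r) : Prop := forall i, (Xf i)^T *m Z i = 0.

Lemma tangent_expand Z i : tangent Z -> Yf i *m ((Yf i)^T *m Z i) = Z i.
Proof.
move=> /(_ i) XZ; case: (hF i) => _ _ _ /(congr1 (mulmx^~ (Z i))).
by rewrite mulmxDl -!mulmxA XZ mulmx0 add0r mul1mx.
Qed.

Lemma coordvec_locdecode c : coordvec Yf (locdecode Yf c) = c.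
Proof.
rewrite -[RHS]submxcolK; apply: eq_mxcol => i.
by case: (hF i) => _ YY _ _; rewrite mulmxA YY mul1mx vec_mxK trmxK.
Qed.

Lemma locdecode_tangent c : tangent (locdecode Yf c).
Proof. by move=> i; case: (hF i) => _ _ XY _; rewrite mulmxA XY mul0mx. Qed.

Lemma coordvec_comb (P Q S : @fam R k n r) a b :
  coordvec Yf (fun i => P i - a *: Q i + b *: S i) =
  coordvec Yf P - a *: coordvec Yf Q + b *: coordvec Yf S.
Proof.
apply/matrixP => x y; rewrite !mxE mulmxDr mulmxBr -!scalemxAr.
by rewrite !(linearD, linearB, linearZ) /= !mxE !linearN /= !mxE mulrN.
Qed.

Lemma ipf_coordvec (A B : @fam R k n r) : tangent A ->
  ipf A B = dot (coordvec Yf A) (coordvec Yf B).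
Proof.
move=> tA; rewrite /dot /coordvec tr_mxcol mul_mxrow_mxcol summxE /ipf.
apply: eq_bigr => i _; rewrite -[RHS]/(dot _ _) -mxtrace_mulTmx.
by rewrite -{1}(tangent_expand i tA) trmx_mul -mulmxA.
Qed.

Definition hess_op (Hc : 'M[R]_(Ndim n r)) (Z : @fam R k n r) : @fam R k n r :=
  locdecode Yf (Hc *m coordvec Yf Z).

Definition bfgs_op Hc (S Yd Z : @fam R k n r) : @fam R k n r :=
  let HS := hess_op Hc S in
  fun i => hess_op Hc Z i - (ipf HS Z / ipf HS S) *: HS i + (ipf Yd Z / ipf S Yd) *: Yd i.

Lemma bfgs_op_tangent Hc S Yd Z : tangent Yd -> tangent (bfgs_op Hc S Yd Z).
Proof.
move=> tYd i; rewrite mulmxDr mulmxBr -!scalemxAr !(locdecode_tangent _ i) tYd.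
by rewrite !scaler0 subrr addr0.
Qed.

Lemma coordvec_bfgs_op Hc S Yd Z : tangent S -> tangent Yd ->
  coordvec Yf (bfgs_op Hc S Yd Z) =
  bfgs_mx Hc (coordvec Yf S) (coordvec Yf Yd) *m coordvec Yf Z.
Proof.
move=> tS tYd; set s := coordvec Yf S; set y := coordvec Yf Yd.
have cHS : coordvec Yf (hess_op Hc S) = Hc *m s := coordvec_locdecode _.
have iHS Z' : ipf (hess_op Hc S) Z' = dot (Hc *m s) (coordvec Yf Z').
  by rewrite ipf_coordvec ?cHS //; exact: locdecode_tangent.
rewrite coordvec_comb coordvec_locdecode cHS bfgs_mx_mul !iHS !ipf_coordvec //.
by rewrite -/s -/y (dotC s y) (dotC s (Hc *m s)).
Qed.
End Coordinates.

Theorem theorem6p6 (R : realType) (k : nat) (n r : 'I_k -> nat)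
  (f : (forall i : 'I_k, 'M[R]_(n i, r i)) -> R)
  (G : (forall i : 'I_k, 'M[R]_(n i, r i)) -> forall i : 'I_k, 'M[R]_(n i, r i))
  (hG : forall X E : forall i : 'I_k, 'M[R]_(n i, r i),
     is_derive (0 : R) (1 : R) (fun s : R => f (fun j => X j + s *: E j))
       (ipf (G X) E))
  (X : forall i : 'I_k, 'M[R]_(n i, r i))
  (Yb : forall i : 'I_k, 'M[R]_(n i, n i - r i))
  (hXY : forall i, orth_compl (X i) (Yb i))
  (D : forall i : 'I_k, 'M[R]_(n i, r i))
  (hD : forall i, (X i)^T *m D i = 0)
  (U : forall i : 'I_k, 'M[R]_(n i, r i))
  (sigma : forall i : 'I_k, 'rV[R]_(r i))
  (V : forall i : 'I_k, 'M[R]_(r i))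
  (hsvd : forall i, thin_svd (D i) (U i) (sigma i) (V i))
  (t : R) (ht : 0 < t)
  (Hc L : 'M[R]_(Ndim n r)) (hL : L \in unitmx) (hH : Hc = L *m L^T) :
  let Xt : @fam R k n r := fun i => geod (X i) (U i) (sigma i) (V i) t in
  let T := fun i => transp (X i) (U i) (sigma i) (V i) t in
  let Ybt := fun i => T i *m Yb i in
  let S : @fam R k n r := fun i => t *: (T i *m D i) in
  let grad := fun (Z : @fam R k n r) (i : 'I_k) =>
    (1%:M - Z i *m (Z i)^T) *m G Z i in
  let Yd : @fam R k n r := fun i => grad Xt i - T i *m grad X i in
  let Hop := fun Z : @fam R k n r => locdecode Ybt (Hc *m coordvec Ybt Z) in
  let HS := Hop S in
  let Hplus := fun (Z : @fam R k n r) (i : 'I_k) =>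
    Hop Z i - (ipf HS Z / ipf HS S) *: HS i + (ipf Yd Z / ipf S Yd) *: Yd i in
  let s := coordvec Ybt S in
  let y := coordvec Ybt Yd in
  0 < ipf S Yd ->
  exists Hp : 'M[R]_(Ndim n r),
    [/\ forall Z : @fam R k n r, (forall i, (Xt i)^T *m Z i = 0) ->
          (forall i, (Xt i)^T *m Hplus Z i = 0) /\
          coordvec Ybt (Hplus Z) = Hp *m coordvec Ybt Z,
        Hp = bfgs_mx Hc s y &
        bfgs_optimal Hc L s y Hp].
Proof.
move=> Xt T Ybt S grad Yd Hop HS Hplus s y SYd_gt0.
have XX i : (X i)^T *m X i = 1%:M by case: (hXY i).
have frame i : orth_compl (Xt i) (Ybt i).
  by case: (hXY i) => _ YY XY _; exact: geod_orth_compl.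
have tS : tangent Xt S.
  by move=> i; rewrite -scalemxAr (transp_tangent _ (XX i) (hD i) (hsvd i)) ?hD ?scaler0.
have tYd : tangent Xt Yd.
  move=> i; have [XtXt _ _ _] := frame i.
  rewrite mulmxBr mulmx_tr_proj_compl // (transp_tangent _ (XX i) (hD i) (hsvd i)).
    by rewrite subrr.
  exact: mulmx_tr_proj_compl.
exists (bfgs_mx Hc s y); split => //.
  by move=> Z _; split; [exact: bfgs_op_tangent | exact: coordvec_bfgs_op].
by rewrite hH; apply: bfgs_mx_optimal; rewrite // dotC -(ipf_coordvec frame).
Qed.
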